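(* Let $q:\mathbb{R}\to\mathbb{R}$ be infinitely differentiable and strictly positive, let $p(t)=\frac1{q(t)}\left(\frac54\left(\frac{q'(t)}{q(t)}\right)^2-\frac{q''(t)}{q(t)}\right)$, and suppose there are real numbers $\eta_1>0$, $\eta_2>0$ with $\eta_1\le q(t)\le\eta_2$, $|p(t)|\le\eta_2$ and $|q'(t)|\le\eta_2$ for all $0\le t\le1$. Let $k=20\left(\frac{\eta_2}{\eta_1}\right)^2+8\eta_2^2+10\frac{\eta_2}{\eta_1}+1$, and let $\epsilon$ be a real number with $0<\epsilon<\eta_1/2$. Suppose $p_b:[0,1]\to\mathbb{R}$ is infinitely differentiable with $\sup_{0\le t\le1}|p(t)-p_b(t)|\le\epsilon e^{-k}$. Then there exists an infinitely differentiable $q_b:[0,1]\to\mathbb{R}$ such that $$\frac1{q_b(t)}\left(\frac54\left(\frac{q_b'(t)}{q_b(t)}\right)^2-\frac{q_b''(t)}{q_b(t)}\right)=p_b(t)\quad\text{for all }0\le t\le1$$ and $\sup_{0\le t\le1}|q(t)-q_b(t)|\le\epsilon$. *)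

From Stdlib Require Import Reals.
Open Scope R_scope.

Definition deriv_seq (D : nat -> R -> R) : Prop :=
  forall (n : nat) (x : R), derivable_pt_lim (D n) x (D (S n) x).

Definition deriv_on (a b : R) (f f' : R -> R) : Prop :=
  forall x, a <= x <= b ->
    forall eps, 0 < eps -> exists delta, 0 < delta /\
      forall h, h <> 0 -> a <= x + h <= b -> Rabs h < delta ->
        Rabs ((f (x + h) - f x) / h - f' x) < eps.

Definition deriv_seq_on (a b : R) (D : nat -> R -> R) : Prop :=
  forall n : nat, deriv_on a b (D n) (D (S n)).

Definition smooth_on (a b : R) (f : R -> R) : Prop :=
  exists D : nat -> R -> R,
    (forall x, a <= x <= b -> D 0%nat x = f x) /\ deriv_seq_on a b D.

Definition pfun (q q' q'' : R -> R) (t : R) : R :=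
  / q t * (5 / 4 * (q' t / q t) ^ 2 - q'' t / q t).

From Stdlib Require Import Reals Lra Lia ClassicalEpsilon.
From Coquelicot Require Import Coquelicot.
Open Scope R_scope.

(* The substitution [q = w^(-4)] turns [pfun q q' q''] into [4 w^3 w''], so [qb] is sought
   as [W^(-4)] where [W] solves [W'' = pb / (4 W^3)] with the initial data of
   [w = q^(-1/4)]; the defect of [w] in this equation is at most [delta = sup |p - pb|].
   As [q <= eta2], [w] stays above [(11/10) m] with [m = (2 eta2)^(-1/4)].  Freezing the
   nonlinearity below [m] makes it globally Lipschitz with constant [L = 3 sup|pb| / (4 m^4)],
   and Picard iteration, whose successive differences are controlled by a second-order
   comparison principle, yields [W] with [|W - w| <= delta e^L / (4 m^3)].  The factor
   [exp (-k)] in the hypothesis makes this at most [m / 10], so [W] never reaches the frozen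
   region, and makes [|q - W^(-4)| <= 4 |w - W| / m^5] at most [eps].  Bootstrapping the
   equation shows that [W], hence [qb], is smooth. *)

(** * One-sided derivatives on a closed interval *)

Lemma ball_Rabs (x e y : R) : ball x e y <-> Rabs (y - x) < e.
Proof. reflexivity. Qed.

Lemma filterlim_Rplus_fun {T} {F} {FF : @Filter T F} (f g : T -> R) l m :
  filterlim f F (locally l) -> filterlim g F (locally m) ->
  filterlim (fun x => f x + g x) F (locally (l + m)).
Proof. intros Hf Hg. eapply filterlim_comp_2; eauto. apply (filterlim_plus l m). Qed.

Lemma filterlim_Rmult_fun {T} {F} {FF : @Filter T F} (f g : T -> R) l m :
  filterlim f F (locally l) -> filterlim g F (locally m) ->
  filterlim (fun x => f x * g x) F (locally (l * m)).
Proof. intros Hf Hg. eapply filterlim_comp_2; eauto. apply (filterlim_mult l m). Qed.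

Lemma filterlim_Ropp_fun {T} {F} {FF : @Filter T F} (f : T -> R) l :
  filterlim f F (locally l) -> filterlim (fun x => - f x) F (locally (- l)).
Proof. intros Hf. eapply filterlim_comp; [exact Hf | apply (filterlim_opp l)]. Qed.

Lemma filterlim_Rinv_fun {T} {F} {FF : @Filter T F} (f : T -> R) l : l <> 0 ->
  filterlim f F (locally l) -> filterlim (fun x => / f x) F (locally (/ l)).
Proof.
  intros Hl Hf. eapply filterlim_comp; eauto.
  apply continuity_pt_filterlim, continuity_pt_inv; [apply continuity_pt_id | exact Hl].
Qed.

Section OneSidedDerivatives.

Variables a b : R.

Definition diff_quot (f : R -> R) (x h : R) : R := (f (x + h) - f x) / h.

Definition admissible_increment (x h : R) : Prop := h <> 0 /\ a <= x + h <= b.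

Definition increments_at (x : R) : (R -> Prop) -> Prop :=
  within (admissible_increment x) (locally 0).

Instance increments_at_filter x : Filter (increments_at x).
Proof. apply within_filter, locally_filter. Qed.

Lemma filterlim_increments_at_ext x (phi psi : R -> R) l :
  (forall h, admissible_increment x h -> phi h = psi h) ->
  filterlim phi (increments_at x) (locally l) -> filterlim psi (increments_at x) (locally l).
Proof.
  intros E. apply filterlim_ext_loc. unfold increments_at, within. now apply filter_forall.
Qed.

Lemma filterlim_increments_at x (phi : R -> R) l :
  filterlim phi (increments_at x) (locally l) <->
  forall eps, 0 < eps -> exists delta, 0 < delta /\
    forall h, h <> 0 -> a <= x + h <= b -> Rabs h < delta -> Rabs (phi h - l) < eps.
Proof.
  rewrite filterlim_locally. split.
  - intros H eps Heps. destruct (H (mkposreal eps Heps)) as [[d Hd] Hball].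
    exists d. split; [exact Hd|]. intros h H0 Hh Hd'.
    apply Hball; [apply ball_Rabs; now rewrite Rminus_0_r | now split].
  - intros H eps. destruct (H eps (cond_pos eps)) as [d [Hd Hh]].
    exists (mkposreal d Hd). intros h Hball [H0 H1]. apply ball_Rabs.
    apply Hh; [exact H0 | exact H1 |].
    change (Rabs (h - 0) < d) in Hball. now rewrite Rminus_0_r in Hball.
Qed.

Lemma deriv_on_filterlim f f' : deriv_on a b f f' <->
  forall x, a <= x <= b -> filterlim (diff_quot f x) (increments_at x) (locally (f' x)).
Proof.
  split; intros H x Hx; specialize (H x Hx); now apply filterlim_increments_at.
Qed.

Lemma deriv_on_continuous f f' x : a <= x <= b -> deriv_on a b f f' ->
  filterlim (fun h => f (x + h)) (increments_at x) (locally (f x)).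
Proof.
  intros Hx H. apply deriv_on_filterlim with (x := x) in H; [|exact Hx].
  assert (Hid : filterlim (fun h => h) (increments_at x) (locally 0)).
  { apply filterlim_increments_at. intros eps Heps. exists eps. split; [exact Heps|].
    intros h _ _ Hh. now rewrite Rminus_0_r. }
  assert (Hlim := filterlim_Rplus_fun _ _ _ _ (filterlim_Rmult_fun _ _ _ _ H Hid)
                    (filterlim_const (F := increments_at x) (f x))).
  replace (f' x * 0 + f x) with (f x) in Hlim by ring.
  refine (filterlim_increments_at_ext _ _ _ _ _ Hlim). intros h [Hh _].
  unfold diff_quot. field. exact Hh.
Qed.

Lemma deriv_on_ext f f' g g' : (forall x, a <= x <= b -> f x = g x) ->
  (forall x, a <= x <= b -> f' x = g' x) -> deriv_on a b f f' -> deriv_on a b g g'.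
Proof.
  intros E E' H x Hx eps Heps. destruct (H x Hx eps Heps) as [d [Hd Hh]].
  exists d. split; [exact Hd|]. intros h H0 H1 H2.
  rewrite <- (E x Hx), <- (E (x + h) H1), <- (E' x Hx). auto.
Qed.

Lemma deriv_on_derivable_pt_lim f f' :
  (forall x, a <= x <= b -> derivable_pt_lim f x (f' x)) -> deriv_on a b f f'.
Proof.
  intros H x Hx eps Heps. destruct (H x Hx eps Heps) as [d Hd].
  exists d. split; [apply cond_pos|]. intros h H0 _ H2. auto.
Qed.

Lemma deriv_on_const c : deriv_on a b (fun _ => c) (fun _ => 0).
Proof.
  apply deriv_on_derivable_pt_lim. intros x _. apply (derivable_pt_lim_const c).
Qed.

Lemma deriv_on_plus f f' g g' : deriv_on a b f f' -> deriv_on a b g g' ->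
  deriv_on a b (fun x => f x + g x) (fun x => f' x + g' x).
Proof.
  intros Hf Hg. apply deriv_on_filterlim. intros x Hx.
  assert (Hlim := filterlim_Rplus_fun _ _ _ _
    (proj1 (deriv_on_filterlim _ _) Hf x Hx) (proj1 (deriv_on_filterlim _ _) Hg x Hx)).
  refine (filterlim_increments_at_ext _ _ _ _ _ Hlim). intros h [Hh _].
  unfold diff_quot. field. exact Hh.
Qed.

Lemma deriv_on_mult f f' g g' : deriv_on a b f f' -> deriv_on a b g g' ->
  deriv_on a b (fun x => f x * g x) (fun x => f' x * g x + f x * g' x).
Proof.
  intros Hf Hg. apply deriv_on_filterlim. intros x Hx.
  assert (Hlim := filterlim_Rplus_fun _ _ _ _
    (filterlim_Rmult_fun _ _ _ _ (proj1 (deriv_on_filterlim _ _) Hf x Hx)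
                                 (deriv_on_continuous _ _ x Hx Hg))
    (filterlim_Rmult_fun _ _ _ _ (filterlim_const (F := increments_at x) (f x))
                                 (proj1 (deriv_on_filterlim _ _) Hg x Hx))).
  refine (filterlim_increments_at_ext _ _ _ _ _ Hlim). intros h [Hh _].
  unfold diff_quot. field. exact Hh.
Qed.

Lemma deriv_on_inv f f' : (forall x, a <= x <= b -> f x <> 0) -> deriv_on a b f f' ->
  deriv_on a b (fun x => / f x) (fun x => - f' x * / f x * / f x).
Proof.
  intros Hnz Hf. apply deriv_on_filterlim. intros x Hx.
  assert (Hlim := filterlim_Rmult_fun _ _ _ _
    (filterlim_Rmult_fun _ _ _ _
       (filterlim_Ropp_fun _ _ (proj1 (deriv_on_filterlim _ _) Hf x Hx))
       (filterlim_Rinv_fun _ _ (Hnz x Hx) (deriv_on_continuous _ _ x Hx Hf)))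
    (filterlim_const (F := increments_at x) (/ f x))).
  refine (filterlim_increments_at_ext _ _ _ _ _ Hlim). intros h [Hh Hxh].
  unfold diff_quot.
  assert (f (x + h) <> 0) by now apply Hnz. assert (f x <> 0) by now apply Hnz.
  field. auto.
Qed.

Fixpoint derivable_n_on (n : nat) (f : R -> R) : Prop :=
  match n with
  | O => True
  | S n => exists f', deriv_on a b f f' /\ derivable_n_on n f'
  end.

Lemma derivable_n_on_ext n : forall f g, (forall x, a <= x <= b -> f x = g x) ->
  derivable_n_on n f -> derivable_n_on n g.
Proof.
  induction n as [|n IH]; [easy|]. intros f g E [f' [Hf Hn]].
  exists f'. split; [|exact Hn]. eapply deriv_on_ext; [exact E | reflexivity | exact Hf].
Qed.

Lemma derivable_n_on_pred n : forall f, derivable_n_on (S n) f -> derivable_n_on n f.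
Proof.
  induction n as [|n IH]; [easy|]. intros f [f' [Hf Hn]]. exists f'. auto.
Qed.

Lemma derivable_n_on_const n : forall c, derivable_n_on n (fun _ => c).
Proof.
  induction n as [|n IH]; [easy|]. intros c.
  exists (fun _ => 0). split; [apply deriv_on_const | apply IH].
Qed.

Lemma derivable_n_on_plus n : forall f g,
  derivable_n_on n f -> derivable_n_on n g -> derivable_n_on n (fun x => f x + g x).
Proof.
  induction n as [|n IH]; [easy|]. intros f g [f' [Hf Hfn]] [g' [Hg Hgn]].
  exists (fun x => f' x + g' x). split; [apply deriv_on_plus | apply IH]; assumption.
Qed.

Lemma derivable_n_on_mult n : forall f g,
  derivable_n_on n f -> derivable_n_on n g -> derivable_n_on n (fun x => f x * g x).
Proof.
  induction n as [|n IH]; [easy|]. intros f g Hf Hg.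
  destruct (Hf) as [f' [Hf' Hfn]], (Hg) as [g' [Hg' Hgn]].
  exists (fun x => f' x * g x + f x * g' x). split; [now apply deriv_on_mult|].
  apply derivable_n_on_plus; apply IH; auto; now apply derivable_n_on_pred.
Qed.

Lemma derivable_n_on_pow n f k : derivable_n_on n f -> derivable_n_on n (fun x => f x ^ k).
Proof.
  intros Hf. induction k as [|k IH]; simpl.
  - apply derivable_n_on_const.
  - now apply derivable_n_on_mult.
Qed.

Lemma derivable_n_on_inv n : forall f, (forall x, a <= x <= b -> f x <> 0) ->
  derivable_n_on n f -> derivable_n_on n (fun x => / f x).
Proof.
  induction n as [|n IH]; [easy|]. intros f Hnz Hf.
  assert (Hfn := derivable_n_on_pred _ _ Hf). destruct Hf as [f' [Hf' Hf'n]].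
  exists (fun x => - f' x * / f x * / f x). split; [now apply deriv_on_inv|].
  apply derivable_n_on_mult; [apply derivable_n_on_mult|]; auto.
  apply derivable_n_on_ext with (fun x => -1 * f' x); [intros; ring|].
  apply derivable_n_on_mult; [apply derivable_n_on_const | exact Hf'n].
Qed.

Lemma derivable_n_on_deriv_seq_on D : deriv_seq_on a b D -> forall n k, derivable_n_on n (D k).
Proof.
  intros HD n. induction n as [|n IH]; [easy|]. intros k. exists (D (S k)). auto.
Qed.

Hypothesis Hab : a < b.

Lemma increments_at_proper x : a <= x <= b -> ProperFilter' (increments_at x).
Proof.
  intros Hx. constructor; [|apply increments_at_filter]. intros [eps Heps].
  set (h := Rmin (eps / 2) ((b - a) / 2)).
  assert (Hh : 0 < h <= eps / 2).
  { split; [apply Rmin_glb_lt|apply Rmin_l]; generalize (cond_pos eps); lra. }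
  assert (Hhb : h <= (b - a) / 2) by apply Rmin_r.
  assert (Heps2 := cond_pos eps).
  destruct (Rle_dec x ((a + b) / 2)).
  - apply (Heps h); [| split; lra].
    apply ball_Rabs. rewrite Rminus_0_r, Rabs_pos_eq; lra.
  - apply (Heps (- h)); [| split; lra].
    apply ball_Rabs. rewrite Rminus_0_r, Rabs_Ropp, Rabs_pos_eq; lra.
Qed.

Lemma deriv_on_unique f f1 f2 : deriv_on a b f f1 -> deriv_on a b f f2 ->
  forall x, a <= x <= b -> f1 x = f2 x.
Proof.
  intros H1 H2 x Hx.
  apply (filterlim_locally_unique (FF := increments_at_proper x Hx) (diff_quot f x)).
  - now apply deriv_on_filterlim.
  - now apply deriv_on_filterlim.
Qed.

Lemma derivable_n_on_derivative n f f' :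
  derivable_n_on (S n) f -> deriv_on a b f f' -> derivable_n_on n f'.
Proof.
  intros [g [Hg Hn]] Hf'. apply derivable_n_on_ext with g; [|exact Hn].
  intros x Hx. exact (deriv_on_unique _ _ _ Hg Hf' x Hx).
Qed.

Lemma smooth_on_derivable_n f : (forall n, derivable_n_on n f) -> smooth_on a b f.
Proof.
  intros Hf.
  pose (next h := epsilon (inhabits (fun _ : R => 0)) (fun g => deriv_on a b h g)).
  assert (Hnext : forall h, derivable_n_on 1 h -> deriv_on a b h (next h)).
  { intros h [g [Hg _]]. apply (epsilon_spec _ (fun g => deriv_on a b h g)). now exists g. }
  pose (D := fix D n := match n with O => f | S n => next (D n) end).
  assert (HD : forall n k, derivable_n_on k (D n)).
  { induction n as [|n IH]; [exact Hf|]. intros k.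
    apply (derivable_n_on_derivative k (D n)); [apply IH | apply Hnext, IH]. }
  exists D. split; [reflexivity|]. intros n. apply Hnext, HD.
Qed.

End OneSidedDerivatives.

Lemma derivable_pt_lim_eq f x l l' : derivable_pt_lim f x l -> l = l' -> derivable_pt_lim f x l'.
Proof. now intros H <-. Qed.

Lemma derivable_pt_lim_fun_plus f g x l m : derivable_pt_lim f x l -> derivable_pt_lim g x m ->
  derivable_pt_lim (fun t => f t + g t) x (l + m).
Proof. apply derivable_pt_lim_plus. Qed.

Lemma derivable_pt_lim_fun_minus f g x l m : derivable_pt_lim f x l -> derivable_pt_lim g x m ->
  derivable_pt_lim (fun t => f t - g t) x (l - m).
Proof. apply derivable_pt_lim_minus. Qed.

Lemma derivable_pt_lim_fun_mult f g x l m : derivable_pt_lim f x l -> derivable_pt_lim g x m ->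
  derivable_pt_lim (fun t => f t * g t) x (l * g x + f x * m).
Proof. apply derivable_pt_lim_mult. Qed.

Lemma derivable_pt_lim_fun_inv f x l : derivable_pt_lim f x l -> f x <> 0 ->
  derivable_pt_lim (fun t => / f t) x (- l / f x ^ 2).
Proof.
  intros Hf Hnz. apply is_derive_Reals, is_derive_inv; [now apply is_derive_Reals | exact Hnz].
Qed.

Lemma derivable_pt_lim_fun_pow f x l n : derivable_pt_lim f x l ->
  derivable_pt_lim (fun t => f t ^ n) x (INR n * f x ^ pred n * l).
Proof.
  intros Hf. eapply derivable_pt_lim_eq.
  - apply (derivable_pt_lim_comp f (fun y => y ^ n)); [exact Hf | apply derivable_pt_lim_pow].
  - ring.
Qed.

Lemma continuity_pt_derivable_pt_lim f x l : derivable_pt_lim f x l -> continuity_pt f x.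
Proof. intros H. apply derivable_continuous_pt. now exists l. Qed.

Lemma continuity_pt_fun_pow f x n : continuity_pt f x -> continuity_pt (fun t => f t ^ n) x.
Proof.
  intros Hf. apply (continuity_pt_comp f (fun y => y ^ n)); [exact Hf|].
  apply derivable_continuous_pt, derivable_pt_pow.
Qed.

Lemma continuity_pt_lipschitz_dominated h u x :
  (forall y z, Rabs (h y - h z) <= Rabs (u y - u z)) -> continuity_pt u x -> continuity_pt h x.
Proof.
  intros Hhu Hu eps Heps. destruct (Hu eps Heps) as [d [Hd Hball]].
  exists d. split; [exact Hd|]. intros y Hy. eapply Rle_lt_trans; [apply Hhu | exact (Hball y Hy)].
Qed.

Lemma derivable_pt_lim_RInt g : (forall x, continuity_pt g x) ->
  forall t, derivable_pt_lim (fun s => RInt g 0 s) t (g t).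
Proof.
  intros Hg t. apply is_derive_Reals, is_derive_RInt with (a := 0).
  - apply filter_forall. intros y. apply (RInt_correct g), ex_RInt_continuous.
    intros z _. now apply continuity_pt_filterlim.
  - now apply continuity_pt_filterlim.
Qed.

Lemma Rmax_l_lipschitz y z m : Rabs (Rmax y m - Rmax z m) <= Rabs (y - z).
Proof. unfold Rmax. repeat destruct Rle_dec; unfold Rabs; repeat destruct Rcase_abs; lra. Qed.

Definition clamp01 (t : R) : R := Rmax 0 (Rmin 1 t).

Lemma clamp01_in t : 0 <= clamp01 t <= 1.
Proof. unfold clamp01, Rmax, Rmin. repeat destruct Rle_dec; lra. Qed.

Lemma clamp01_id t : 0 <= t <= 1 -> clamp01 t = t.
Proof. intros. unfold clamp01, Rmax, Rmin. repeat destruct Rle_dec; lra. Qed.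

Lemma clamp01_lipschitz y z : Rabs (clamp01 y - clamp01 z) <= Rabs (y - z).
Proof.
  unfold clamp01, Rmax, Rmin. repeat destruct Rle_dec; unfold Rabs; repeat destruct Rcase_abs; lra.
Qed.

Lemma continuity_pt_clamp01 x : continuity_pt clamp01 x.
Proof.
  apply continuity_pt_lipschitz_dominated with (fun t => t);
    [apply clamp01_lipschitz | apply continuity_pt_id].
Qed.

Lemma continuity_pt_clamp01_deriv_on f f' x : deriv_on 0 1 f f' ->
  continuity_pt (fun t => f (clamp01 t)) x.
Proof.
  intros Hf eps Heps.
  destruct (proj1 (filterlim_increments_at 0 1 _ _ _)
              (deriv_on_continuous 0 1 f f' _ (clamp01_in x) Hf) eps Heps) as [d [Hd Hball]].
  exists d. split; [exact Hd|]. intros y [_ Hy]. simpl in *. unfold R_dist in *.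
  destruct (Req_dec (clamp01 y) (clamp01 x)) as [E|Hne].
  - rewrite E, Rminus_diag, Rabs_R0. exact Heps.
  - specialize (Hball (clamp01 y - clamp01 x) ltac:(lra)).
    replace (clamp01 x + (clamp01 y - clamp01 x)) with (clamp01 y) in Hball by ring.
    apply Hball; [apply clamp01_in|]. eapply Rle_lt_trans; [apply clamp01_lipschitz | exact Hy].
Qed.

Lemma smooth_on_continuity_pt_clamp01 f : smooth_on 0 1 f ->
  forall x, continuity_pt (fun t => f (clamp01 t)) x.
Proof.
  intros [D [HD0 HD]] x. apply continuity_pt_clamp01_deriv_on with (D 1%nat).
  apply deriv_on_ext with (D 0%nat) (D 1%nat); [exact HD0 | easy | apply HD].
Qed.

(** * A comparison principle for second derivatives *)

Section Comparison.

Variables a b : R.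

Lemma nonneg_of_derivative_nonneg f f' :
  (forall t, a <= t <= b -> derivable_pt_lim f t (f' t)) ->
  0 <= f a -> (forall t, a <= t <= b -> 0 <= f' t) -> forall t, a <= t <= b -> 0 <= f t.
Proof.
  intros Hd Ha Hf' t Ht. destruct (Req_dec t a) as [->|Hta]; [exact Ha|].
  destruct (MVT_cor2 f f' a t ltac:(lra)) as [c [Hc Hac]].
  - intros c Hc. apply Hd. lra.
  - assert (0 <= f' c) by (apply Hf'; lra). nra.
Qed.

Lemma nonneg_of_second_derivative_nonneg h h' h'' :
  (forall t, a <= t <= b -> derivable_pt_lim h t (h' t)) ->
  (forall t, a <= t <= b -> derivable_pt_lim h' t (h'' t)) ->
  h a = 0 -> h' a = 0 -> (forall t, a <= t <= b -> 0 <= h'' t) ->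
  forall t, a <= t <= b -> 0 <= h t.
Proof.
  intros Hh Hh' Ha Ha' Hh''. apply nonneg_of_derivative_nonneg with h'; [exact Hh | lra |].
  apply nonneg_of_derivative_nonneg with h''; [exact Hh' | lra | exact Hh''].
Qed.

Lemma abs_le_of_second_derivative_le d d' d'' g g' g'' :
  (forall t, a <= t <= b -> derivable_pt_lim d t (d' t)) ->
  (forall t, a <= t <= b -> derivable_pt_lim d' t (d'' t)) ->
  (forall t, a <= t <= b -> derivable_pt_lim g t (g' t)) ->
  (forall t, a <= t <= b -> derivable_pt_lim g' t (g'' t)) ->
  d a = 0 -> d' a = 0 -> g a = 0 -> g' a = 0 ->
  (forall t, a <= t <= b -> Rabs (d'' t) <= g'' t) ->
  forall t, a <= t <= b -> Rabs (d t) <= g t.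
Proof.
  intros Hd Hd' Hg Hg' Hd0 Hd'0 Hg0 Hg'0 Hb t Ht. apply Rabs_le.
  assert (Hsub : 0 <= g t - d t).
  { apply (nonneg_of_second_derivative_nonneg (fun t => g t - d t) (fun t => g' t - d' t)
                                               (fun t => g'' t - d'' t));
      [intros s Hs; apply derivable_pt_lim_fun_minus; auto .. | lra | lra | | exact Ht].
    intros s Hs. specialize (Hb s Hs). apply Rabs_le_between in Hb. lra. }
  assert (Hadd : 0 <= g t + d t).
  { apply (nonneg_of_second_derivative_nonneg (fun t => g t + d t) (fun t => g' t + d' t)
                                               (fun t => g'' t + d'' t));
      [intros s Hs; apply derivable_pt_lim_fun_plus; auto .. | lra | lra | | exact Ht].
    intros s Hs. specialize (Hb s Hs). apply Rabs_le_between in Hb. lra. }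
  lra.
Qed.

End Comparison.

Definition monomial (c : R) (k : nat) (t : R) : R := c * t ^ k / INR (Factorial.fact k).

Lemma derivable_pt_lim_monomial c k t : derivable_pt_lim (monomial c (S k)) t (monomial c k t).
Proof.
  unfold monomial.
  assert (H := derivable_pt_lim_scal _ (c / INR (Factorial.fact (S k))) _ _
                 (derivable_pt_lim_pow t (S k))).
  eapply derivable_pt_lim_eq.
  - eapply derivable_pt_lim_ext; [|exact H]. intros x. unfold mult_real_fct. field.
    apply INR_fact_neq_0.
  - simpl pred. rewrite fact_simpl, mult_INR, S_INR. field.
    split; [apply INR_fact_neq_0 | pose proof (pos_INR k); lra].
Qed.

Lemma monomial_at_0 c k : monomial c (S k) 0 = 0.
Proof. unfold monomial. rewrite pow_i by lia. unfold Rdiv. ring. Qed.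

Lemma monomial_O c t : monomial c 0 t = c.
Proof. unfold monomial. simpl. field. Qed.

Lemma monomial_scal c k t r : r * monomial c k t = monomial (c * r) k t.
Proof. unfold monomial. field. apply INR_fact_neq_0. Qed.

Lemma monomial_le c k t : 0 <= c -> 0 <= t <= 1 -> monomial c k t <= c / INR (Factorial.fact k).
Proof.
  intros Hc Ht. unfold monomial, Rdiv. apply Rmult_le_compat_r.
  - left. apply Rinv_0_lt_compat, INR_fact_lt_0.
  - rewrite <- (Rmult_1_r c) at 2. apply Rmult_le_compat_l; [exact Hc|].
    rewrite <- (pow1 k). apply pow_incr. lra.
Qed.

Fixpoint exp_partial (L : R) (n : nat) : R :=
  match n with O => 0 | S n => exp_partial L n + L ^ n / INR (Factorial.fact n) end.

Lemma exp_partial_S L n : exp_partial L (S n) = E1 L n.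
Proof.
  induction n as [|n IH].
  - unfold E1. simpl. field.
  - change (exp_partial L (S n) + L ^ S n / INR (Factorial.fact (S n)) = E1 L (S n)).
    rewrite IH. unfold E1. rewrite tech5. unfold Rdiv. ring.
Qed.

Lemma exp_partial_cv L : Un_cv (exp_partial L) (exp L).
Proof.
  intros eps Heps. destruct (E1_cvg L eps Heps) as [N HN]. exists (S N).
  intros [|n] Hn; [lia|]. rewrite exp_partial_S. apply HN. lia.
Qed.

Lemma exp_partial_incr L n k : 0 <= L -> exp_partial L n <= exp_partial L (n + k).
Proof.
  intros HL. induction k as [|k IH]; [rewrite Nat.add_0_r; lra|].
  rewrite Nat.add_succ_r. simpl.
  assert (0 <= L ^ (n + k) / INR (Factorial.fact (n + k))).
  { apply Rdiv_le_0_compat; [now apply pow_le | apply INR_fact_lt_0]. }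
  lra.
Qed.

Lemma exp_partial_le L n : 0 <= L -> exp_partial L n <= exp L.
Proof.
  intros HL. apply growing_ineq; [|apply exp_partial_cv].
  intros m. rewrite <- Nat.add_1_r. now apply exp_partial_incr.
Qed.

(** * Picard iteration for [w'' = F t w] on [[0, 1]] *)

Lemma Rabs_sub_le_of_cv (u : nat -> R) l c B N : Un_cv u l ->
  (forall n, (N <= n)%nat -> Rabs (u n - c) <= B) -> Rabs (l - c) <= B.
Proof.
  intros Hu Hb. apply Rle_plus_epsilon. intros e He. destruct (Hu e He) as [M HM].
  specialize (HM (max M N) ltac:(lia)). specialize (Hb (max M N) ltac:(lia)).
  unfold R_dist in HM. rewrite Rabs_minus_sym in HM.
  pose proof (Rabs_triang (l - u (max M N)) (u (max M N) - c)).
  replace (l - u (max M N) + (u (max M N) - c)) with (l - c) in * by ring. lra.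
Qed.

Section PicardIteration.

Variables (F : R -> R -> R) (L C0 : R) (w0 w0' w0'' : R -> R).

Hypothesis F_continuous : forall u, (forall x, continuity_pt u x) ->
  forall x, continuity_pt (fun t => F t (u t)) x.
Hypothesis F_lipschitz : forall t y z, 0 <= t <= 1 -> Rabs (F t y - F t z) <= L * Rabs (y - z).
Hypothesis L_ge0 : 0 <= L.
Hypothesis C0_ge0 : 0 <= C0.
Hypothesis w0_derivative : forall t, derivable_pt_lim w0 t (w0' t).
Hypothesis w0'_derivative : forall t, derivable_pt_lim w0' t (w0'' t).
Hypothesis w0_defect : forall t, 0 <= t <= 1 -> Rabs (F t (w0 t) - w0'' t) <= C0.

Definition picard_velocity (u : R -> R) (s : R) : R := w0' 0 + RInt (fun r => F r (u r)) 0 s.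

Definition picard_step (u : R -> R) (t : R) : R := w0 0 + RInt (picard_velocity u) 0 t.

Lemma picard_velocity_at_0 u : picard_velocity u 0 = w0' 0.
Proof. unfold picard_velocity. rewrite RInt_point. unfold zero; simpl. ring. Qed.

Lemma picard_step_at_0 u : picard_step u 0 = w0 0.
Proof. unfold picard_step. rewrite RInt_point. unfold zero; simpl. ring. Qed.

Section Step.

Variable u : R -> R.
Hypothesis u_continuous : forall x, continuity_pt u x.

Lemma picard_velocity_derivative t : derivable_pt_lim (picard_velocity u) t (F t (u t)).
Proof.
  eapply derivable_pt_lim_eq.
  - apply derivable_pt_lim_fun_plus; [apply derivable_pt_lim_const|].
    apply derivable_pt_lim_RInt, F_continuous, u_continuous.
  - ring.
Qed.

Lemma picard_step_derivative t : derivable_pt_lim (picard_step u) t (picard_velocity u t).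
Proof.
  eapply derivable_pt_lim_eq.
  - apply derivable_pt_lim_fun_plus; [apply derivable_pt_lim_const|].
    apply derivable_pt_lim_RInt. intros x.
    eapply continuity_pt_derivable_pt_lim, picard_velocity_derivative.
  - ring.
Qed.

Lemma picard_step_continuous x : continuity_pt (picard_step u) x.
Proof. eapply continuity_pt_derivable_pt_lim, picard_step_derivative. Qed.

Lemma picard_step_error v v' v'' c k :
  (forall t, 0 <= t <= 1 -> derivable_pt_lim v t (v' t)) ->
  (forall t, 0 <= t <= 1 -> derivable_pt_lim v' t (v'' t)) ->
  v 0 = w0 0 -> v' 0 = w0' 0 ->
  (forall t, 0 <= t <= 1 -> Rabs (F t (u t) - v'' t) <= monomial c k t) ->
  forall t, 0 <= t <= 1 -> Rabs (picard_step u t - v t) <= monomial c (S (S k)) t.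
Proof.
  intros Hv Hv' Hv0 Hv'0 Hdefect.
  apply (abs_le_of_second_derivative_le 0 1 _ (fun t => picard_velocity u t - v' t)
           (fun t => F t (u t) - v'' t) _ (monomial c (S k)) (monomial c k)).
  - intros t Ht. apply derivable_pt_lim_fun_minus; [apply picard_step_derivative | auto].
  - intros t Ht. apply derivable_pt_lim_fun_minus; [apply picard_velocity_derivative | auto].
  - intros t _. apply derivable_pt_lim_monomial.
  - intros t _. apply derivable_pt_lim_monomial.
  - rewrite picard_step_at_0, Hv0. ring.
  - rewrite picard_velocity_at_0, Hv'0. ring.
  - apply monomial_at_0.
  - apply monomial_at_0.
  - exact Hdefect.
Qed.

End Step.

Fixpoint picard_iterate (n : nat) : R -> R :=
  match n with O => w0 | S n => picard_step (picard_iterate n) end.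

Lemma picard_iterate_continuous n x : continuity_pt (picard_iterate n) x.
Proof.
  revert x. induction n as [|n IH]; intros x.
  - eapply continuity_pt_derivable_pt_lim, w0_derivative.
  - apply picard_step_continuous, IH.
Qed.

Lemma picard_iterate_succ_diff n t : 0 <= t <= 1 ->
  Rabs (picard_iterate (S n) t - picard_iterate n t) <= monomial (C0 * L ^ n) (S (S (2 * n))) t.
Proof.
  revert t. induction n as [|n IH]; intros t Ht.
  - apply (picard_step_error w0 (picard_iterate_continuous 0) w0 w0' w0''); auto.
    intros s Hs. rewrite monomial_O. simpl. rewrite Rmult_1_r. auto.
  - replace (S (S (2 * S n))) with (S (S (S (S (2 * n))))) by lia.
    apply (picard_step_error _ (picard_iterate_continuous _) _ (picard_velocity (picard_iterate n))
             (fun s => F s (picard_iterate n s)));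
      [| | apply picard_step_at_0 | apply picard_velocity_at_0 | | exact Ht].
    + intros s _. apply picard_step_derivative, picard_iterate_continuous.
    + intros s _. apply picard_velocity_derivative, picard_iterate_continuous.
    + intros s Hs. eapply Rle_trans; [apply F_lipschitz, Hs|].
      replace (C0 * L ^ S n) with (C0 * L ^ n * L) by (simpl; ring).
      rewrite <- monomial_scal. apply Rmult_le_compat_l; auto.
Qed.

Lemma picard_iterate_succ_le n t : 0 <= t <= 1 ->
  Rabs (picard_iterate (S n) t - picard_iterate n t) <= C0 * (L ^ n / INR (Factorial.fact n)).
Proof.
  intros Ht. eapply Rle_trans; [apply picard_iterate_succ_diff, Ht|].
  eapply Rle_trans; [apply monomial_le; [apply Rmult_le_pos, pow_le|]; auto|].
  unfold Rdiv. rewrite Rmult_assoc. apply Rmult_le_compat_l, Rmult_le_compat_l;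
    [exact C0_ge0 | now apply pow_le|].
  apply Rinv_le_contravar; [apply INR_fact_lt_0|]. apply le_INR, Factorial.fact_le. lia.
Qed.

Lemma picard_iterate_diff n k t : 0 <= t <= 1 ->
  Rabs (picard_iterate (n + k) t - picard_iterate n t)
    <= C0 * (exp_partial L (n + k) - exp_partial L n).
Proof.
  intros Ht. induction k as [|k IH].
  - rewrite Nat.add_0_r, Rminus_diag, Rabs_R0. lra.
  - rewrite Nat.add_succ_r. simpl exp_partial.
    pose proof (picard_iterate_succ_le (n + k) t Ht).
    pose proof (Rabs_triang (picard_iterate (S (n + k)) t - picard_iterate (n + k) t)
                            (picard_iterate (n + k) t - picard_iterate n t)).
    replace (picard_iterate (S (n + k)) t - picard_iterate (n + k) t
             + (picard_iterate (n + k) t - picard_iterate n t))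
      with (picard_iterate (S (n + k)) t - picard_iterate n t) in * by ring.
    lra.
Qed.

Lemma picard_iterate_diff_tail n m t : 0 <= t <= 1 -> (n <= m)%nat ->
  Rabs (picard_iterate m t - picard_iterate n t) <= C0 * (exp L - exp_partial L n).
Proof.
  intros Ht Hnm. replace m with (n + (m - n))%nat by lia.
  eapply Rle_trans; [apply picard_iterate_diff, Ht|].
  apply Rmult_le_compat_l; [exact C0_ge0|].
  pose proof (exp_partial_le L (n + (m - n)) L_ge0). lra.
Qed.

Lemma exp_partial_tail_lt eps : 0 < eps ->
  exists N, forall n, (N <= n)%nat -> C0 * (exp L - exp_partial L n) < eps.
Proof.
  intros Heps. destruct (exp_partial_cv L (eps / (C0 + 1))) as [N HN].
  { apply Rdiv_lt_0_compat; lra. }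
  exists N. intros n Hn. specialize (HN n Hn). unfold R_dist in HN.
  pose proof (exp_partial_le L n L_ge0).
  rewrite Rabs_left1 in HN by lra.
  apply Rle_lt_trans with ((C0 + 1) * (exp L - exp_partial L n)); [nra|].
  apply Rmult_lt_compat_l with (r := C0 + 1) in HN; [|lra].
  replace ((C0 + 1) * (eps / (C0 + 1))) with eps in HN by (field; lra). lra.
Qed.

Lemma picard_iterate_cauchy t : Cauchy_crit (fun n => picard_iterate n (clamp01 t)).
Proof.
  intros eps Heps. destruct (exp_partial_tail_lt (eps / 2)) as [N HN]; [lra|].
  exists N. intros n m Hn Hm. unfold R_dist.
  pose proof (picard_iterate_diff_tail N n _ (clamp01_in t) Hn).
  pose proof (picard_iterate_diff_tail N m _ (clamp01_in t) Hm).
  specialize (HN N (le_n N)).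
  pose proof (Rabs_triang (picard_iterate n (clamp01 t) - picard_iterate N (clamp01 t))
                          (picard_iterate N (clamp01 t) - picard_iterate m (clamp01 t))).
  rewrite (Rabs_minus_sym (picard_iterate N _)) in H1.
  replace (picard_iterate n (clamp01 t) - picard_iterate N (clamp01 t)
           + (picard_iterate N (clamp01 t) - picard_iterate m (clamp01 t)))
    with (picard_iterate n (clamp01 t) - picard_iterate m (clamp01 t)) in H1 by ring.
  lra.
Qed.

(* The iterates are extended to all of [R] through [clamp01] so that the limit is a
   continuous function on [R], as the integral operator requires. *)
Definition picard_limit (t : R) : R := proj1_sig (Rcomplete.R_complete _ (picard_iterate_cauchy t)).

Lemma picard_limit_tail n t :
  Rabs (picard_limit t - picard_iterate n (clamp01 t)) <= C0 * (exp L - exp_partial L n).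
Proof.
  apply (Rabs_sub_le_of_cv (fun k => picard_iterate k (clamp01 t)) _ _ _ n).
  - unfold picard_limit. destruct (Rcomplete.R_complete _ _) as [l Hl]. exact Hl.
  - intros k Hk. now apply picard_iterate_diff_tail, Hk; apply clamp01_in.
Qed.

Lemma picard_limit_continuous x : continuity_pt picard_limit x.
Proof.
  set (r := mkposreal 1 Rlt_0_1).
  apply (CVU_continuity (fun n t => picard_iterate n (clamp01 t)) picard_limit x r).
  - intros eps Heps. destruct (exp_partial_tail_lt eps Heps) as [N HN].
    exists N. intros n y Hn _. eapply Rle_lt_trans; [apply picard_limit_tail | now apply HN].
  - intros n y _. apply (continuity_pt_comp clamp01 (picard_iterate n));
      [apply continuity_pt_clamp01 | apply picard_iterate_continuous].
  - unfold Boule. rewrite Rminus_diag, Rabs_R0. apply Rlt_0_1.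
Qed.

Lemma picard_limit_fixed t : 0 <= t <= 1 -> picard_step picard_limit t = picard_limit t.
Proof.
  intros Ht.
  assert (Hbound : forall n, Rabs (picard_step picard_limit t - picard_limit t)
                               <= (L + 1) * (C0 * (exp L - exp_partial L n))).
  { intros n. set (X := C0 * (exp L - exp_partial L n)).
    assert (HX : 0 <= X) by (apply Rmult_le_pos; [|pose proof (exp_partial_le L n L_ge0)]; lra).
    assert (Hstep : Rabs (picard_step picard_limit t - picard_iterate (S n) t) <= L * X).
    { eapply Rle_trans.
      - apply (picard_step_error _ picard_limit_continuous _ (picard_velocity (picard_iterate n))
                 (fun s => F s (picard_iterate n s)) (X * L) 0);
          [| | apply picard_step_at_0 | apply picard_velocity_at_0 | | exact Ht].
        + intros s _. apply picard_step_derivative, picard_iterate_continuous.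
        + intros s _. apply picard_velocity_derivative, picard_iterate_continuous.
        + intros s Hs. rewrite monomial_O. eapply Rle_trans; [apply F_lipschitz, Hs|].
          rewrite Rmult_comm. apply Rmult_le_compat_r; [exact L_ge0|].
          rewrite <- (clamp01_id s Hs) at 2. apply picard_limit_tail.
      - eapply Rle_trans; [apply monomial_le; [apply Rmult_le_pos|]; auto|].
        simpl. nra. }
    assert (Hlimit : Rabs (picard_iterate (S n) t - picard_limit t) <= X).
    { rewrite Rabs_minus_sym. rewrite <- (clamp01_id t Ht) at 2.
      eapply Rle_trans; [apply picard_limit_tail|]. apply Rmult_le_compat_l; [exact C0_ge0|].
      simpl. assert (0 <= L ^ n / INR (Factorial.fact n)).
      { apply Rdiv_le_0_compat; [now apply pow_le | apply INR_fact_lt_0]. }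
      lra. }
    pose proof (Rabs_triang (picard_step picard_limit t - picard_iterate (S n) t)
                            (picard_iterate (S n) t - picard_limit t)).
    replace (picard_step picard_limit t - picard_iterate (S n) t
             + (picard_iterate (S n) t - picard_limit t))
      with (picard_step picard_limit t - picard_limit t) in * by ring.
    lra. }
  apply Rminus_diag_uniq, Rabs_eq_0, Rle_antisym; [|apply Rabs_pos].
  apply Rle_plus_epsilon. intros e He. rewrite Rplus_0_l.
  destruct (exp_partial_tail_lt (e / (L + 1))) as [N HN]; [apply Rdiv_lt_0_compat; lra|].
  eapply Rle_trans; [apply (Hbound N)|]. specialize (HN N (le_n N)).
  apply Rmult_lt_compat_l with (r := L + 1) in HN; [|lra].
  replace ((L + 1) * (e / (L + 1))) with e in HN by (field; lra). lra.
Qed.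

Theorem picard_solution : exists W W' W'' : R -> R,
  (forall t, derivable_pt_lim W t (W' t)) /\ (forall t, derivable_pt_lim W' t (W'' t)) /\
  (forall t, 0 <= t <= 1 -> W'' t = F t (W t)) /\
  (forall t, 0 <= t <= 1 -> Rabs (W t - w0 t) <= C0 * exp L).
Proof.
  exists (picard_step picard_limit), (picard_velocity picard_limit),
    (fun t => F t (picard_limit t)).
  split; [|split; [|split]].
  - apply picard_step_derivative, picard_limit_continuous.
  - apply picard_velocity_derivative, picard_limit_continuous.
  - intros t Ht. now rewrite picard_limit_fixed.
  - intros t Ht. rewrite picard_limit_fixed by exact Ht.
    pose proof (picard_limit_tail 0 t) as H0. rewrite clamp01_id in H0 by exact Ht.
    simpl exp_partial in H0. now rewrite Rminus_0_r in H0.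
Qed.

End PicardIteration.

(** * The substitution [q = w^(-4)] *)

Definition inv_fourth_root (x : R) : R := / sqrt (sqrt x).

Lemma inv_fourth_root_pos x : 0 < x -> 0 < inv_fourth_root x.
Proof. intros Hx. apply Rinv_0_lt_compat, sqrt_lt_R0, sqrt_lt_R0, Hx. Qed.

Lemma inv_fourth_root_pow4 x : 0 < x -> / inv_fourth_root x ^ 4 = x.
Proof.
  intros Hx. unfold inv_fourth_root. rewrite pow_inv, Rinv_inv.
  assert (Hs : 0 < sqrt x) by now apply sqrt_lt_R0.
  replace (sqrt (sqrt x) ^ 4) with (sqrt (sqrt x) * sqrt (sqrt x) * (sqrt (sqrt x) * sqrt (sqrt x)))
    by ring.
  now rewrite !sqrt_sqrt by lra.
Qed.

Lemma derivable_pt_lim_inv_fourth_root x : 0 < x ->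
  derivable_pt_lim inv_fourth_root x (- (1 / 4) * inv_fourth_root x / x).
Proof.
  intros Hx. assert (Hs : 0 < sqrt x) by now apply sqrt_lt_R0.
  assert (Hss : 0 < sqrt (sqrt x)) by now apply sqrt_lt_R0.
  eapply derivable_pt_lim_eq.
  - apply (derivable_pt_lim_fun_inv (fun y => sqrt (sqrt y))); [|lra].
    apply (derivable_pt_lim_comp sqrt sqrt); now apply derivable_pt_lim_sqrt.
  - unfold inv_fourth_root.
    assert (Hx2 := sqrt_sqrt x ltac:(lra)). assert (Hs2 := sqrt_sqrt (sqrt x) ltac:(lra)).
    set (s := sqrt x) in *. set (r := sqrt s) in *. clearbody r s. subst. field. lra.
Qed.

Lemma inv_fourth_root_ode q q' q'' : (forall t, 0 < q t) ->
  (forall t, derivable_pt_lim q t (q' t)) -> (forall t, derivable_pt_lim q' t (q'' t)) ->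
  exists w' w'' : R -> R,
    (forall t, derivable_pt_lim (fun s => inv_fourth_root (q s)) t (w' t)) /\
    (forall t, derivable_pt_lim w' t (w'' t)) /\
    (forall t, 4 * inv_fourth_root (q t) ^ 3 * w'' t = pfun q q' q'' t).
Proof.
  intros Hpos Hq Hq'.
  set (w := fun s => inv_fourth_root (q s)).
  set (w' := fun s => - (1 / 4) * w s * q' s / q s).
  assert (Hw : forall t, derivable_pt_lim w t (w' t)).
  { intros t. eapply derivable_pt_lim_eq.
    - apply (derivable_pt_lim_comp q inv_fourth_root);
        [apply Hq | now apply derivable_pt_lim_inv_fourth_root].
    - unfold w', w. field. apply Rgt_not_eq, Hpos. }
  exists w', (fun t => pfun q q' q'' t / (4 * w t ^ 3)). split; [exact Hw|]. split.
  - intros t. pose proof (Hpos t). pose proof (inv_fourth_root_pos (q t) (Hpos t)).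
    eapply derivable_pt_lim_eq.
    + apply derivable_pt_lim_fun_mult;
        [apply derivable_pt_lim_fun_mult;
           [apply derivable_pt_lim_fun_mult; [apply derivable_pt_lim_const | apply Hw]
           | apply Hq'] |].
      apply derivable_pt_lim_fun_inv; [apply Hq | lra].
    + unfold pfun, w', w. assert (Hq4 := inv_fourth_root_pow4 (q t) (Hpos t)).
      set (r := inv_fourth_root (q t)) in *. set (Q := q t) in *. clearbody r Q. subst Q.
      field. lra.
  - intros t. pose proof (inv_fourth_root_pos (q t) (Hpos t)). unfold w. field. lra.
Qed.

Lemma inv_fourth_root_margin x y : 0 < x <= y ->
  11 / 10 * inv_fourth_root (2 * y) <= inv_fourth_root x.
Proof.
  intros Hxy. set (m := inv_fourth_root (2 * y)). set (w := inv_fourth_root x).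
  assert (Hm : 0 < m) by (apply inv_fourth_root_pos; lra).
  assert (Hw : 0 < w) by (apply inv_fourth_root_pos; lra).
  assert (Hm4 : / m ^ 4 = 2 * y) by (apply inv_fourth_root_pow4; lra).
  assert (Hw4 : / w ^ 4 = x) by (apply inv_fourth_root_pow4; lra).
  destruct (Rle_lt_dec (11 / 10 * m) w) as [Hle|Hlt]; [exact Hle|].
  assert (Hpow : w ^ 4 <= (11 / 10) ^ 4 * m ^ 4)
    by (rewrite <- Rpow_mult_distr; apply pow_incr; lra).
  apply Rinv_le_contravar in Hpow; [|now apply pow_lt].
  rewrite Rinv_mult, Hm4, Hw4 in Hpow. simpl in Hpow. lra.
Qed.

Lemma pfun_inv_pow4 W W' W'' t : W t <> 0 ->
  pfun (fun s => / W s ^ 4) (fun s => -4 * W' s / W s ^ 5)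
       (fun s => 20 * W' s ^ 2 / W s ^ 6 - 4 * W'' s / W s ^ 5) t = 4 * W t ^ 3 * W'' t.
Proof. intros Hnz. unfold pfun. field. exact Hnz. Qed.

Lemma derivable_pt_lim_inv_pow4 W W' x : derivable_pt_lim W x (W' x) -> W x <> 0 ->
  derivable_pt_lim (fun s => / W s ^ 4) x (-4 * W' x / W x ^ 5).
Proof.
  intros HW Hnz. eapply derivable_pt_lim_eq.
  - apply (derivable_pt_lim_fun_inv (fun s => W s ^ 4));
      [apply derivable_pt_lim_fun_pow, HW | now apply pow_nonzero].
  - simpl. field. exact Hnz.
Qed.

Lemma derivable_pt_lim_inv_pow4_derivative W W' W'' x :
  derivable_pt_lim W x (W' x) -> derivable_pt_lim W' x (W'' x) -> W x <> 0 ->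
  derivable_pt_lim (fun s => -4 * W' s / W s ^ 5) x
    (20 * W' x ^ 2 / W x ^ 6 - 4 * W'' x / W x ^ 5).
Proof.
  intros HW HW' Hnz. eapply derivable_pt_lim_eq.
  - apply derivable_pt_lim_fun_mult;
      [apply derivable_pt_lim_fun_mult; [apply derivable_pt_lim_const | exact HW'] |].
    apply (derivable_pt_lim_fun_inv (fun s => W s ^ 5));
      [apply derivable_pt_lim_fun_pow, HW | now apply pow_nonzero].
  - simpl. field. exact Hnz.
Qed.

Section CubicODE.

Variables pb W W' W'' : R -> R.

Hypothesis pb_smooth : smooth_on 0 1 pb.
Hypothesis W_derivative : forall t, 0 <= t <= 1 -> derivable_pt_lim W t (W' t).
Hypothesis W'_derivative : forall t, 0 <= t <= 1 -> derivable_pt_lim W' t (W'' t).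
Hypothesis W_nonzero : forall t, 0 <= t <= 1 -> W t <> 0.
Hypothesis W_ode : forall t, 0 <= t <= 1 -> 4 * W t ^ 3 * W'' t = pb t.

Lemma cubic_ode_derivable_n n : derivable_n_on 0 1 n W.
Proof.
  destruct pb_smooth as [D [HD0 HD]].
  assert (Hpb : forall n, derivable_n_on 0 1 n pb).
  { intros k. apply derivable_n_on_ext with (D 0%nat); [exact HD0|].
    now apply derivable_n_on_deriv_seq_on. }
  assert (HW'' : forall n, derivable_n_on 0 1 n W -> derivable_n_on 0 1 n W'').
  { intros k Hk. apply derivable_n_on_ext with (fun t => pb t * / (4 * W t ^ 3)).
    - intros t Ht. rewrite <- (W_ode t Ht). field. now apply W_nonzero.
    - apply derivable_n_on_mult, derivable_n_on_inv; [apply Hpb | |].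
      + intros t Ht. apply Rmult_integral_contrapositive_currified; [lra|].
        now apply pow_nonzero, W_nonzero.
      + apply derivable_n_on_mult; [apply derivable_n_on_const | now apply derivable_n_on_pow]. }
  enough (H : derivable_n_on 0 1 n W /\ derivable_n_on 0 1 (S n) W) by apply H.
  induction n as [|n [IHn IHSn]].
  - split; [exact I|]. exists W'. split; [now apply deriv_on_derivable_pt_lim | exact I].
  - split; [exact IHSn|]. exists W'. split; [now apply deriv_on_derivable_pt_lim|].
    exists W''. split; [now apply deriv_on_derivable_pt_lim | now apply HW''].
Qed.

Theorem cubic_ode_inv_pow4_smooth : exists D : nat -> R -> R,
  (forall t, 0 <= t <= 1 -> D 0%nat t = / W t ^ 4) /\ deriv_seq_on 0 1 D /\
  (forall t, 0 <= t <= 1 -> pfun (fun s => / W s ^ 4) (D 1%nat) (D 2%nat) t = pb t).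
Proof.
  destruct (smooth_on_derivable_n 0 1 ltac:(lra) (fun s => / W s ^ 4)) as [D [HD0 HD]].
  { intros n. apply derivable_n_on_inv; [|now apply derivable_n_on_pow, cubic_ode_derivable_n].
    intros t Ht. now apply pow_nonzero, W_nonzero. }
  set (Q1 := fun s => -4 * W' s / W s ^ 5).
  set (Q2 := fun s => 20 * W' s ^ 2 / W s ^ 6 - 4 * W'' s / W s ^ 5).
  assert (HD1 : forall t, 0 <= t <= 1 -> D 1%nat t = Q1 t).
  { apply (deriv_on_unique 0 1 ltac:(lra) (D 0%nat)); [apply HD|].
    apply deriv_on_ext with (fun s => / W s ^ 4) Q1; [intros; symmetry; auto | easy |].
    apply deriv_on_derivable_pt_lim. intros t Ht.
    apply derivable_pt_lim_inv_pow4; auto. }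
  assert (HD2 : forall t, 0 <= t <= 1 -> D 2%nat t = Q2 t).
  { apply (deriv_on_unique 0 1 ltac:(lra) (D 1%nat)); [apply HD|].
    apply deriv_on_ext with Q1 Q2; [intros; symmetry; auto | easy |].
    apply deriv_on_derivable_pt_lim. intros t Ht.
    apply derivable_pt_lim_inv_pow4_derivative; auto. }
  exists D. split; [exact HD0|]. split; [exact HD|]. intros t Ht.
  rewrite <- (W_ode t Ht), <- (pfun_inv_pow4 W W' W'' t (W_nonzero t Ht)).
  unfold pfun. now rewrite HD1, HD2.
Qed.

End CubicODE.

(** * Stability of [w'' = p / (4 w^3)] *)

Lemma pow_sub_abs_le a b c n : Rabs a <= c -> Rabs b <= c ->
  Rabs (a ^ S n - b ^ S n) <= INR (S n) * c ^ n * Rabs (a - b).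
Proof.
  intros Ha Hb. assert (Hc : 0 <= c) by (eapply Rle_trans; [apply Rabs_pos | exact Ha]).
  induction n as [|n IH].
  - simpl. rewrite !Rmult_1_r. lra.
  - replace (a ^ S (S n) - b ^ S (S n)) with (a * (a ^ S n - b ^ S n) + b ^ S n * (a - b))
      by (simpl; ring).
    assert (Hbn : Rabs (b ^ S n) <= c ^ S n)
      by (rewrite <- RPow_abs; apply pow_incr; split; [apply Rabs_pos | exact Hb]).
    eapply Rle_trans; [apply Rabs_triang|]. rewrite !Rabs_mult.
    assert (0 <= Rabs (a - b)) by apply Rabs_pos.
    assert (0 <= Rabs (a ^ S n - b ^ S n)) by apply Rabs_pos.
    assert (Rabs a * Rabs (a ^ S n - b ^ S n) <= c * (INR (S n) * c ^ n * Rabs (a - b)))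
      by (apply Rmult_le_compat; auto using Rabs_pos).
    assert (Rabs (b ^ S n) * Rabs (a - b) <= c ^ S n * Rabs (a - b))
      by (apply Rmult_le_compat_r; auto).
    rewrite S_INR. simpl in *. nra.
Qed.

Lemma Rinv_pow_lipschitz m n x y : 0 < m -> m <= x -> m <= y ->
  Rabs (/ x ^ S n - / y ^ S n) <= INR (S n) / m ^ S (S n) * Rabs (x - y).
Proof.
  intros Hm Hx Hy.
  assert (Hinv : forall z, m <= z -> Rabs (/ z) <= / m).
  { intros z Hz. rewrite Rabs_pos_eq by (left; apply Rinv_0_lt_compat; lra).
    apply Rinv_le_contravar; lra. }
  rewrite <- !pow_inv. eapply Rle_trans; [apply (pow_sub_abs_le _ _ (/ m)); auto|].
  replace (/ x - / y) with ((y - x) * / (x * y)) by (field; lra).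
  rewrite Rabs_mult, Rabs_minus_sym, (Rabs_pos_eq (/ (x * y)))
    by (left; apply Rinv_0_lt_compat; nra).
  assert (Hxy : / (x * y) <= / m ^ 2) by (apply Rinv_le_contravar; simpl; nra).
  replace (INR (S n) / m ^ S (S n) * Rabs (x - y))
    with (INR (S n) * (/ m) ^ n * (Rabs (x - y) * / m ^ 2))
    by (rewrite pow_inv; simpl; field; split; [apply pow_nonzero|]; lra).
  apply Rmult_le_compat_l.
  { apply Rmult_le_pos; [apply pos_INR | apply pow_le; left; apply Rinv_0_lt_compat; lra]. }
  apply Rmult_le_compat_l; [apply Rabs_pos | exact Hxy].
Qed.

Definition cubic_ode_error_bound (m P delta : R) : R :=
  delta / (4 * m ^ 3) * exp (3 * P / (4 * m ^ 4)).

Section CubicODEPerturbation.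

Variables (p pb w0 w0' w0'' : R -> R) (m P delta : R).

Hypothesis m_pos : 0 < m.
Hypothesis pb_continuous : forall x, continuity_pt (fun t => pb (clamp01 t)) x.
Hypothesis p_bound : forall t, 0 <= t <= 1 -> Rabs (p t) <= P.
Hypothesis pb_close : forall t, 0 <= t <= 1 -> Rabs (p t - pb t) <= delta.
Hypothesis w0_derivative : forall t, derivable_pt_lim w0 t (w0' t).
Hypothesis w0'_derivative : forall t, derivable_pt_lim w0' t (w0'' t).
Hypothesis w0_ode : forall t, 0 <= t <= 1 -> 4 * w0 t ^ 3 * w0'' t = p t.
Hypothesis w0_margin : forall t, 0 <= t <= 1 -> 11 / 10 * m <= w0 t.
Hypothesis error_small : cubic_ode_error_bound m (P + delta) delta <= m / 10.

(* Below [m] the nonlinearity is frozen, which makes it globally Lipschitz; the solution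
   never reaches that region. *)
Definition cubic_nonlinearity (t y : R) : R := pb (clamp01 t) / (4 * Rmax y m ^ 3).

Lemma cubic_nonlinearity_continuous u : (forall x, continuity_pt u x) ->
  forall x, continuity_pt (fun t => cubic_nonlinearity t (u t)) x.
Proof.
  intros Hu x. unfold cubic_nonlinearity.
  assert (Hmax : continuity_pt (fun t => Rmax (u t) m) x).
  { apply continuity_pt_lipschitz_dominated with u; [intros; apply Rmax_l_lipschitz | apply Hu]. }
  apply (continuity_pt_div (fun t => pb (clamp01 t))); [apply pb_continuous | |].
  - apply (continuity_pt_mult (fun _ => 4)); [apply continuity_pt_const; intros ? ?; reflexivity|].
    now apply continuity_pt_fun_pow.
  - assert (0 < Rmax (u x) m) by (eapply Rlt_le_trans; [exact m_pos | apply Rmax_r]).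
    apply Rgt_not_eq, Rmult_lt_0_compat; [lra | now apply pow_lt].
Qed.

Lemma cubic_nonlinearity_lipschitz t y z : 0 <= t <= 1 ->
  Rabs (cubic_nonlinearity t y - cubic_nonlinearity t z)
    <= 3 * (P + delta) / (4 * m ^ 4) * Rabs (y - z).
Proof.
  intros Ht. unfold cubic_nonlinearity. rewrite clamp01_id by exact Ht.
  assert (Hy : m <= Rmax y m) by apply Rmax_r. assert (Hz : m <= Rmax z m) by apply Rmax_r.
  replace (pb t / (4 * Rmax y m ^ 3) - pb t / (4 * Rmax z m ^ 3))
    with (pb t / 4 * (/ Rmax y m ^ 3 - / Rmax z m ^ 3))
    by (field; lra).
  replace (3 * (P + delta) / (4 * m ^ 4)) with ((P + delta) / 4 * (INR 3 / m ^ 4))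
    by (simpl; field; lra).
  rewrite Rabs_mult, Rmult_assoc. unfold Rdiv at 1. rewrite Rabs_mult, (Rabs_pos_eq (/ 4)) by lra.
  apply Rmult_le_compat; [apply Rmult_le_pos; [apply Rabs_pos | lra] | apply Rabs_pos | |].
  - apply Rmult_le_compat_r; [lra|].
    pose proof (proj1 (Rabs_le_between _ _) (p_bound t Ht)).
    pose proof (proj1 (Rabs_le_between _ _) (pb_close t Ht)). apply Rabs_le. lra.
  - eapply Rle_trans; [apply (Rinv_pow_lipschitz m 2); assumption|].
    apply Rmult_le_compat_l; [|apply Rmax_l_lipschitz].
    apply Rdiv_le_0_compat; [apply pos_INR | now apply pow_lt].
Qed.

Theorem cubic_ode_perturbation : exists W W' W'' : R -> R,
  (forall t, derivable_pt_lim W t (W' t)) /\ (forall t, derivable_pt_lim W' t (W'' t)) /\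
  (forall t, 0 <= t <= 1 -> 4 * W t ^ 3 * W'' t = pb t) /\
  (forall t, 0 <= t <= 1 -> m <= W t) /\
  (forall t, 0 <= t <= 1 -> Rabs (W t - w0 t) <= cubic_ode_error_bound m (P + delta) delta).
Proof.
  assert (HP : 0 <= P) by (eapply Rle_trans; [apply Rabs_pos | apply (p_bound 0); lra]).
  assert (Hdelta : 0 <= delta) by (eapply Rle_trans; [apply Rabs_pos | apply (pb_close 0); lra]).
  assert (Hm3 : 0 < m ^ 3) by now apply pow_lt.
  assert (Hm4 : 0 < m ^ 4) by now apply pow_lt.
  destruct (picard_solution cubic_nonlinearity (3 * (P + delta) / (4 * m ^ 4))
              (delta / (4 * m ^ 3)) w0 w0' w0'') as [W [W' [W'' [HW [HW' [HW'' Hclose]]]]]].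
  - apply cubic_nonlinearity_continuous.
  - apply cubic_nonlinearity_lipschitz.
  - apply Rdiv_le_0_compat; lra.
  - apply Rdiv_le_0_compat; lra.
  - exact w0_derivative.
  - exact w0'_derivative.
  - intros t Ht. pose proof (w0_margin t Ht) as Hw0.
    assert (Hw03 : m ^ 3 <= w0 t ^ 3) by (apply pow_incr; lra).
    unfold cubic_nonlinearity. rewrite clamp01_id, Rmax_left by lra.
    replace (pb t / (4 * w0 t ^ 3) - w0'' t) with (- (p t - pb t) / (4 * w0 t ^ 3))
      by (rewrite <- (w0_ode t Ht); field; lra).
    unfold Rdiv. rewrite Rabs_mult, Rabs_Ropp, (Rabs_pos_eq (/ _))
      by (left; apply Rinv_0_lt_compat; lra).
    apply Rmult_le_compat; [apply Rabs_pos | left; apply Rinv_0_lt_compat; lra | auto |].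
    apply Rinv_le_contravar; lra.
  - assert (HWm : forall t, 0 <= t <= 1 -> m <= W t).
    { intros t Ht. pose proof (proj1 (Rabs_le_between _ _) (Hclose t Ht)).
      pose proof (w0_margin t Ht). unfold cubic_ode_error_bound in error_small. lra. }
    exists W, W', W''. repeat split; [exact HW | exact HW' | | exact HWm | exact Hclose].
    intros t Ht. pose proof (HWm t Ht). rewrite HW'' by exact Ht.
    unfold cubic_nonlinearity. rewrite clamp01_id, Rmax_left by lra.
    field. lra.
Qed.

End CubicODEPerturbation.

Lemma exp_ge_1_plus y : 1 + y <= exp y.
Proof.
  destruct (Req_dec y 0) as [->|Hy]; [rewrite exp_0; lra | left; now apply exp_ineq1].
Qed.

Lemma exp_4_ge_16 : 16 <= exp 4.
Proof.
  pose proof (exp_ge_1_plus 1). replace 4 with (1 + 1 + 1 + 1) by ring. rewrite !exp_plus.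
  assert (4 <= exp 1 * exp 1) by nra. nra.
Qed.

Lemma mult_exp_le_1 y z : 0 <= y -> z <= - y - 4 -> 10 * y * exp z <= 1.
Proof.
  intros Hy Hz.
  assert (Hmono : exp z <= exp (- y - 4)).
  { destruct (Req_dec z (- y - 4)) as [->|Hne]; [lra | left; apply exp_increasing; lra]. }
  assert (Hinv : exp (- y - 4) * (exp y * exp 4) = 1).
  { rewrite <- !exp_plus. replace (- y - 4 + (y + 4)) with 0 by ring. apply exp_0. }
  pose proof (exp_ge_1_plus y). pose proof exp_4_ge_16. pose proof (exp_pos (- y - 4)).
  assert (10 * y <= exp y * exp 4) by nra.
  assert (10 * y * exp z <= 10 * y * exp (- y - 4)) by (apply Rmult_le_compat_l; lra).
  nra.
Qed.

Definition stability_exponent (eta1 eta2 : R) : R :=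
  20 * (eta2 / eta1) ^ 2 + 8 * eta2 ^ 2 + 10 * (eta2 / eta1) + 1.

Lemma stability_exponent_dominates eta1 eta2 delta :
  0 < eta1 <= eta2 -> 0 <= delta <= eta2 / 2 ->
  10 * eta2 ^ 2 * exp (3 / 2 * (eta2 + delta) * eta2 - stability_exponent eta1 eta2) <= 1.
Proof.
  intros Heta Hdelta. apply mult_exp_le_1; [simpl; nra|].
  assert (Hratio : 1 <= eta2 / eta1) by (apply Rle_div_r; lra).
  unfold stability_exponent. simpl. nra.
Qed.

Lemma stability_error_bound eta1 eta2 eps :
  0 < eta1 <= eta2 -> 0 < eps < eta1 / 2 ->
  let m := inv_fourth_root (2 * eta2) in
  let delta := eps * exp (- stability_exponent eta1 eta2) in
  cubic_ode_error_bound m (eta2 + delta) delta <= m / 10 /\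
  4 / m ^ 5 * cubic_ode_error_bound m (eta2 + delta) delta <= eps.
Proof.
  intros Heta Heps m delta.
  assert (Hm : 0 < m) by (apply inv_fourth_root_pos; lra).
  assert (Hm4 : m ^ 4 = / (2 * eta2))
    by (rewrite <- (inv_fourth_root_pow4 (2 * eta2)) by lra; now rewrite Rinv_inv).
  assert (Hdelta : 0 < delta <= eps).
  { assert (0 < eta2 / eta1) by (apply Rdiv_lt_0_compat; lra).
    unfold delta. split; [apply Rmult_lt_0_compat; [lra | apply exp_pos]|].
    rewrite <- (Rmult_1_r eps) at 2. apply Rmult_le_compat_l; [lra|].
    rewrite <- exp_0. left. apply exp_increasing. unfold stability_exponent. simpl. nra. }
  set (L := 3 * (eta2 + delta) / (4 * m ^ 4)).
  assert (HL : L = 3 / 2 * (eta2 + delta) * eta2) by (unfold L; rewrite Hm4; field; lra).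
  set (X := exp (L - stability_exponent eta1 eta2)).
  assert (HX : 10 * eta2 ^ 2 * X <= 1)
    by (unfold X; rewrite HL; apply stability_exponent_dominates; lra).
  assert (HdX : delta * exp L = eps * X).
  { unfold delta, X. unfold Rminus. rewrite exp_plus. ring. }
  assert (Hm3 : 0 < m ^ 3) by now apply pow_lt.
  assert (HXpos : 0 < X) by apply exp_pos.
  unfold cubic_ode_error_bound. fold L. split.
  - apply Rmult_le_reg_r with (40 * m ^ 3); [lra|].
    replace (delta / (4 * m ^ 3) * exp L * (40 * m ^ 3)) with (10 * (delta * exp L))
      by (field; lra).
    replace (m / 10 * (40 * m ^ 3)) with (4 * m ^ 4) by (simpl; field).
    rewrite HdX, Hm4. apply Rmult_le_reg_r with eta2; [lra|].
    replace (4 * / (2 * eta2) * eta2) with 2 by (field; lra).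
    assert (eps * eta2 <= eta2 / 2 * eta2) by (apply Rmult_le_compat_r; lra).
    simpl in HX. nra.
  - replace (4 / m ^ 5 * (delta / (4 * m ^ 3) * exp L))
      with (delta * exp L / (m ^ 4 * m ^ 4)) by (simpl; field; lra).
    rewrite HdX, Hm4.
    replace (eps * X / (/ (2 * eta2) * / (2 * eta2))) with (eps * (4 * eta2 ^ 2 * X))
      by (simpl; field; lra).
    rewrite <- (Rmult_1_r eps) at 2. apply Rmult_le_compat_l; [lra|].
    assert (0 <= eta2 ^ 2 * X) by (apply Rmult_le_pos; [apply pow2_ge_0 | lra]). lra.
Qed.

Theorem lemma9p1
  (q : R -> R) (Dq : nat -> R -> R)
  (HDq0 : Dq 0%nat = q) (HDq : deriv_seq Dq)
  (Hqpos : forall t, 0 < q t)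
  (eta1 eta2 : R) (Heta1 : 0 < eta1) (Heta2 : 0 < eta2)
  (Hqb : forall t, 0 <= t <= 1 -> eta1 <= q t <= eta2)
  (Hpb : forall t, 0 <= t <= 1 -> Rabs (pfun q (Dq 1%nat) (Dq 2%nat) t) <= eta2)
  (Hq'b : forall t, 0 <= t <= 1 -> Rabs (Dq 1%nat t) <= eta2)
  (eps : R) (Heps : 0 < eps < eta1 / 2)
  (pb : R -> R) (Hpbs : smooth_on 0 1 pb)
  (Hclose : forall t, 0 <= t <= 1 ->
     Rabs (pfun q (Dq 1%nat) (Dq 2%nat) t - pb t)
       <= eps * exp (- (20 * (eta2 / eta1) ^ 2 + 8 * eta2 ^ 2
                        + 10 * (eta2 / eta1) + 1))) :
  exists (qb : R -> R) (Dqb : nat -> R -> R),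
    (forall t, 0 <= t <= 1 -> Dqb 0%nat t = qb t) /\ deriv_seq_on 0 1 Dqb /\
    (forall t, 0 <= t <= 1 -> pfun qb (Dqb 1%nat) (Dqb 2%nat) t = pb t) /\
    (forall t, 0 <= t <= 1 -> Rabs (q t - qb t) <= eps).
Proof.
  fold (stability_exponent eta1 eta2) in Hclose.
  assert (Heta : 0 < eta1 <= eta2) by (pose proof (Hqb 0 ltac:(lra)); lra).
  destruct (stability_error_bound eta1 eta2 eps Heta Heps) as [Hsmall Hfinal].
  set (m := inv_fourth_root (2 * eta2)) in *.
  assert (Hm : 0 < m) by (apply inv_fourth_root_pos; lra).
  destruct (inv_fourth_root_ode q (Dq 1%nat) (Dq 2%nat) Hqpos) as (w0' & w0'' & Hw0 & Hw0' & Hode0);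
    [intros t; rewrite <- HDq0; apply HDq | apply HDq |].
  assert (Hmargin : forall t, 0 <= t <= 1 -> 11 / 10 * m <= inv_fourth_root (q t))
    by (intros t Ht; apply inv_fourth_root_margin; split; [apply Hqpos | apply Hqb, Ht]).
  destruct (cubic_ode_perturbation (pfun q (Dq 1%nat) (Dq 2%nat)) pb _ w0' w0'' m eta2 _ Hm
              (smooth_on_continuity_pt_clamp01 pb Hpbs) Hpb Hclose Hw0 Hw0'
              (fun t _ => Hode0 t) Hmargin Hsmall)
    as (W & W' & W'' & HW & HW' & Hode & HWm & HWw0).
  destruct (cubic_ode_inv_pow4_smooth pb W W' W'' Hpbs) as (D & HD0 & HD & Hpfun);
    [auto | auto | intros t Ht; pose proof (HWm t Ht); lra | exact Hode |].
  exists (fun t => / W t ^ 4), D. split; [exact HD0|]. split; [exact HD|]. split; [exact Hpfun|].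
  intros t Ht. rewrite <- (inv_fourth_root_pow4 (q t) (Hqpos t)) at 1.
  eapply Rle_trans;
    [apply (Rinv_pow_lipschitz m 3); [exact Hm | pose proof (Hmargin t Ht); lra | auto]|].
  eapply Rle_trans; [|exact Hfinal]. replace (INR 4) with 4 by (simpl; ring).
  apply Rmult_le_compat_l; [apply Rdiv_le_0_compat; [lra | now apply pow_lt]|].
  rewrite Rabs_minus_sym. apply HWw0, Ht.
Qed.
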